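(* Let $\alpha=(\alpha^+,0,\dots,0)\in[0,\infty)^n$ with $\alpha^+\in(0,\infty)^l$, $A=\Lambda_\alpha$, and let $\Gamma_1$ (resp. $\Gamma_0$) be a circle in $\mathbb{C}$ enclosing all entries of $\alpha^+$ but not $0$ (resp. enclosing $0$ but no entry of $\alpha^+$). For Hermitian $\tilde E$ (small enough that $\Lambda_\alpha+\tilde E$ has no eigenvalue on $\Gamma_0\cup\Gamma_1$) let $P_i(\tilde E)=\frac{1}{2\pi i}\int_{\Gamma_i}(zI-(\Lambda_\alpha+\tilde E))^{-1}\,dz$, $i=0,1$. Let $Z$ be Hermitian positive semi-definite with $\operatorname{Ran}Z\subseteq\operatorname{Ker}A$, and let $b>0$ be an upper bound for both $\|\tilde E\|$ and $\|Z\|$. Then $$P_1(\tilde E)ZP_0(\tilde E)=O(b^2),\qquad P_1(\tilde E)ZP_1(\tilde E)=O(b^3),$$ where the size of the errors is locally independent of $\alpha^+$.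
   Context: $\Lambda_v$ denotes the diagonal matrix with the vector $v$ on its diagonal; $\|\cdot\|$ is any matrix norm. *)

From HB Require Import structures.
From mathcomp Require Import all_boot all_order all_algebra.
From mathcomp Require Import all_classical all_reals all_analysis.
From mathcomp Require Import complex.
Set Implicit Arguments. Unset Strict Implicit. Unset Printing Implicit Defensive.
Import Order.TTheory GRing.Theory Num.Theory.
Import numFieldNormedType.Exports.
Local Open Scope ring_scope.
Local Open Scope complex_scope.

Definition ctrmx (R : realType) (m n : nat) (M : 'M[R[i]]_(m, n)) : 'M[R[i]]_(n, m) :=
  \matrix_(i < n, j < m) conjc (M j i).

Definition is_hermitian (R : realType) (n : nat) (M : 'M[R[i]]_n) : Prop :=
  ctrmx M = M.

Definition hpsd (R : realType) (n : nat) (M : 'M[R[i]]_n) : Prop :=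
  is_hermitian M /\ forall v : 'cV[R[i]]_n, 0 <= (ctrmx v *m M *m v) 0 0.

(** Frobenius norm (all matrix norms are equivalent in finite dimension). *)
Definition mnorm (R : realType) (m n : nat) (M : 'M[R[i]]_(m, n)) : R :=
  Num.sqrt (\sum_(i < m) \sum_(j < n) ((complex.Re (M i j)) ^+ 2 + (complex.Im (M i j)) ^+ 2)).

Definition Lambda (R : realType) (n : nat) (v : 'I_n -> R) : 'M[R[i]]_n :=
  diag_mx (\row_j ((v j)%:C)).

Definition padz (R : realType) (l m : nat) (ap : 'I_l -> R) : 'I_(l + m) -> R :=
  fun k => match fintype.split k with inl i => ap i | inr _ => 0 end.

Definition circ (R : realType) (c : R[i]) (r : R) (t : R) : R[i] :=
  c + ((r * cos t) +i* (r * sin t)).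
Definition dcirc (R : realType) (r : R) (t : R) : R[i] :=
  (- (r * sin t)) +i* (r * cos t).

Definition cint (R : realType) (c : R[i]) (r : R) (f : R[i] -> R[i]) : R[i] :=
  let g := fun t => f (circ c r t) * dcirc r t in
  let I := (\int[@lebesgue_measure R]_(t in `[0, 2 * pi]%classic) complex.Re (g t))
           +i* (\int[@lebesgue_measure R]_(t in `[0, 2 * pi]%classic) complex.Im (g t)) in
  ((0 : R) +i* (2 * pi))^-1 * I.

Definition riesz (R : realType) (n : nat) (c : R[i]) (r : R) (M : 'M[R[i]]_n)
  : 'M[R[i]]_n :=
  \matrix_(i, j) cint c r (fun z => (invmx (z%:M - M)) i j).

Definition encloses (R : realType) (c : R[i]) (r : R) (x : R[i]) : Prop :=
  `|x - c| < r%:C.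
Definition excludes (R : realType) (c : R[i]) (r : R) (x : R[i]) : Prop :=
  r%:C < `|x - c|.
Arguments padz {R l} m ap _.

From HB Require Import structures.
From mathcomp Require Import all_boot all_order all_algebra.
From mathcomp Require Import all_classical all_reals all_analysis.
From mathcomp Require Import complex.
From mathcomp Require Import lra ring.
Import Order.TTheory GRing.Theory Num.Theory Normc.
Import numFieldNormedType.Exports.
Set Implicit Arguments. Unset Strict Implicit. Unset Printing Implicit Defensive.
Local Open Scope ring_scope.
Local Open Scope complex_scope.
Local Notation Re := (@complex.Re _).
Local Notation Im := (@complex.Im _).

(* Write [D z := (z - Lambda_alpha)^-1] and [G z := (z - Lambda_alpha - E)^-1],
   so that [G = D + D E G].  On the two circles, which stay at a uniform distance
   [d] from the entries of [alpha] for all [alpha^+] near the given one, this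
   identity bounds [G] and makes [G - D] of order [b].  An entry [(i, j)] of
   [P1] with [alpha_i = 0] or [alpha_j = 0] is the integral of [G_ij - D_ij]
   plus that of [D_ij = (i == j) / z], and the latter vanishes because [Gamma_1]
   does not enclose 0; so these entries of [P1] are [O(b)].  A Hermitian [Z]
   with range in [Ker Lambda_alpha] is supported on the block where [alpha]
   vanishes, hence [P1 Z P0] meets those entries of [P1] once and [P1 Z P1]
   twice, giving [O(b^2)] and [O(b^3)]. *)

Section ComplexModulus.
Variable R : realType.
Implicit Types (x y z c : R[i]) (a r t : R).

Lemma normcE z : normc z = Num.sqrt (Re z ^+ 2 + Im z ^+ 2).
Proof. by case: z. Qed.

Lemma normc_ge0 z : 0 <= normc z.
Proof. by rewrite normcE sqrtr_ge0. Qed.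

Lemma normC_normc z : `|z| = (normc z)%:C.
Proof. by rewrite normc_def normcE. Qed.

Lemma normc_real a : normc a%:C = `|a|.
Proof. by rewrite normcE /= expr0n addr0 sqrtr_sqr. Qed.

Lemma normc_Re z : `|Re z| <= normc z.
Proof. by rewrite normcE -sqrtr_sqr ler_sqrt ?lerDl ?sqr_ge0 // addr_ge0 ?sqr_ge0. Qed.

Lemma normc_Im z : `|Im z| <= normc z.
Proof. by rewrite normcE -sqrtr_sqr ler_sqrt ?lerDr ?sqr_ge0 // addr_ge0 ?sqr_ge0. Qed.

Lemma normc_le_ReIm z : normc z <= `|Re z| + `|Im z|.
Proof.
rewrite normcE -[X in _ <= X]ger0_norm ?addr_ge0 // -sqrtr_sqr ler_sqrt ?sqr_ge0 //.
rewrite sqrrD !real_normK ?num_real //.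
by rewrite addrAC lerDl mulrn_wge0 ?mulr_ge0.
Qed.

Lemma normc_sum (I : Type) (s : seq I) (P : pred I) (F : I -> R[i]) :
  normc (\sum_(i <- s | P i) F i) <= \sum_(i <- s | P i) normc (F i).
Proof. exact: (@ler_norm_sum _ (Rcomplex R)). Qed.

Lemma normc_circ_sub c r t : 0 <= r -> normc (circ c r t - c) = r.
Proof.
move=> r_ge0; rewrite /circ addrC addKr normcE /= !exprMn -mulrDr cos2Dsin2 mulr1.
by rewrite sqrtr_sqr ger0_norm.
Qed.

Lemma normc_dcirc r t : 0 <= r -> normc (dcirc r t) = r.
Proof.
move=> r_ge0; rewrite normcE /= sqrrN !exprMn -mulrDr addrC cos2Dsin2 mulr1.
by rewrite sqrtr_sqr ger0_norm.
Qed.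

Lemma circ_dist_ge c r t x y : 0 <= r ->
  `|normc (x - c) - r| - normc (y - x) <= normc (circ c r t - y).
Proof.
move=> r_ge0.
have tri := le_normcD (circ c r t - y) (y - x).
have rev : `|normc (x - c) - normc (circ c r t - c)| <= normc (x - c - (circ c r t - c)).
  exact: (@ler_dist_dist _ (Rcomplex R)).
rewrite normc_circ_sub // (_ : x - c - _ = - (circ c r t - y + (y - x))) ?normcN in rev.
  lra.
by ring.
Qed.

End ComplexModulus.

Section ComplexContinuity.
Variable R : realType.
Implicit Types (f g : R -> R[i]).

(* [R[i]] carries no topology instance, so continuity of a complex-valued
   function of a real variable is expressed through its real and imaginary parts. *)
Definition ccontinuous f :=
  continuous (fun t => Re (f t)) /\ continuous (fun t => Im (f t)).

Lemma ccontinuous_cst (c : R[i]) : ccontinuous (fun=> c).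
Proof. by split=> t; apply: cst_continuous. Qed.

Lemma ccontinuousD f g :
  ccontinuous f -> ccontinuous g -> ccontinuous (fun t => f t + g t).
Proof.
move=> [fRe fIm] [gRe gIm]; split=> t.
  have -> : (fun t => Re (f t + g t)) = (Re \o f) + (Re \o g).
    by apply: funext => s; rewrite !fctE /=; case: (f s); case: (g s).
  exact: continuousD (fRe t) (gRe t).
have -> : (fun t => Im (f t + g t)) = (Im \o f) + (Im \o g).
  by apply: funext => s; rewrite !fctE /=; case: (f s); case: (g s).
exact: continuousD (fIm t) (gIm t).
Qed.

Lemma ccontinuousM f g :
  ccontinuous f -> ccontinuous g -> ccontinuous (fun t => f t * g t).
Proof.
move=> [fRe fIm] [gRe gIm]; split=> t.
  have -> : (fun t => Re (f t * g t)) =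
            (Re \o f) \* (Re \o g) - (Im \o f) \* (Im \o g).
    by apply: funext => s; rewrite !fctE /=; case: (f s); case: (g s).
  exact: continuousB (continuousM (fRe t) (gRe t)) (continuousM (fIm t) (gIm t)).
have -> : (fun t => Im (f t * g t)) =
          (Re \o f) \* (Im \o g) + (Im \o f) \* (Re \o g).
  by apply: funext => s; rewrite !fctE /=; case: (f s) => ? ?; case: (g s) => ? ? /=; ring.
exact: continuousD (continuousM (fRe t) (gIm t)) (continuousM (fIm t) (gRe t)).
Qed.

Lemma ccontinuousB f g :
  ccontinuous f -> ccontinuous g -> ccontinuous (fun t => f t - g t).
Proof.
move=> cf cg; have := ccontinuousD cf (ccontinuousM (ccontinuous_cst (-1)) cg).
by under eq_fun do rewrite mulN1r.
Qed.

Lemma ccontinuousV f : (forall t, f t != 0) -> ccontinuous f ->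
  ccontinuous (fun t => (f t)^-1).
Proof.
move=> f_neq0 [fRe fIm].
pose sq t := Re (f t) * Re (f t) + Im (f t) * Im (f t).
have sq_neq0 t : sq t != 0.
  apply: contra (f_neq0 t) => /eqP sq0.
  by apply/eqP/eq0_normc; rewrite normcE !expr2 -/(sq t) sq0 sqrtr0.
have csq : continuous sq.
  by move=> s; exact: continuousD (continuousM (fRe s) (fRe s)) (continuousM (fIm s) (fIm s)).
split=> t.
  have -> : (fun t => Re (f t)^-1) = (Re \o f) \* (fun t => (sq t)^-1).
    by apply: funext => s; rewrite !fctE /sq /=; case: (f s).
  exact: continuousM (fRe t) (continuousV (sq_neq0 t) (csq t)).
have -> : (fun t => Im (f t)^-1) = - ((Im \o f) \* (fun t => (sq t)^-1)).
  by apply: funext => s; rewrite !fctE /sq /=; case: (f s).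
exact: continuousN (continuousM (fIm t) (continuousV (sq_neq0 t) (csq t))).
Qed.

Lemma ccontinuous_sum (I : Type) (s : seq I) (P : pred I) (F : I -> R -> R[i]) :
  (forall i, P i -> ccontinuous (F i)) ->
  ccontinuous (fun t => \sum_(i <- s | P i) F i t).
Proof.
move=> cF; elim: s => [|i s IHs].
  by under eq_fun do rewrite big_nil; apply: ccontinuous_cst.
under eq_fun do rewrite big_cons.
by case Pi: (P i) => //; apply: ccontinuousD => //; apply: cF.
Qed.

Lemma ccontinuous_prod (I : Type) (s : seq I) (P : pred I) (F : I -> R -> R[i]) :
  (forall i, P i -> ccontinuous (F i)) ->
  ccontinuous (fun t => \prod_(i <- s | P i) F i t).
Proof.
move=> cF; elim: s => [|i s IHs].
  by under eq_fun do rewrite big_nil; apply: ccontinuous_cst.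
under eq_fun do rewrite big_cons.
by case Pi: (P i) => //; apply: ccontinuousM => //; apply: cF.
Qed.

Lemma ccontinuous_circ (c : R[i]) (r : R) : ccontinuous (circ c r).
Proof.
apply: ccontinuousD; first exact: ccontinuous_cst.
split=> t /=; apply: continuousM; [exact: cst_continuous | exact: continuous_cos |
  exact: cst_continuous | exact: continuous_sin].
Qed.

Lemma ccontinuous_dcirc (r : R) : ccontinuous (dcirc r).
Proof.
split=> t /=; last by apply: continuousM; [exact: cst_continuous | exact: continuous_cos].
by apply: (@continuousN _ _ _ (fun t => r * sin t)); apply: continuousM;
  [exact: cst_continuous | exact: continuous_sin].
Qed.

Lemma ccontinuous_det k (A : R -> 'M[R[i]]_k) :
  (forall i j, ccontinuous (fun t => A t i j)) -> ccontinuous (fun t => \det (A t)).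
Proof.
move=> cA; apply: ccontinuous_sum => s _.
apply: ccontinuousM; first exact: ccontinuous_cst.
by apply: ccontinuous_prod => i _; apply: cA.
Qed.

Lemma ccontinuous_invmx k (A : R -> 'M[R[i]]_k) : (forall t, A t \in unitmx) ->
  (forall i j, ccontinuous (fun t => A t i j)) ->
  forall i j, ccontinuous (fun t => invmx (A t) i j).
Proof.
move=> A_unit cA i j.
have -> : (fun t => invmx (A t) i j) = (fun t => (\det (A t))^-1 * cofactor (A t) j i).
  by apply: funext => t; rewrite /invmx A_unit !mxE.
apply: ccontinuousM.
  apply: ccontinuousV; last exact: ccontinuous_det.
  by move=> t; have := A_unit t; rewrite unitmxE unitfE.
apply: ccontinuousM; first exact: ccontinuous_cst.
by apply: ccontinuous_det => i' j'; under eq_fun do rewrite !mxE.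
Qed.

End ComplexContinuity.

Section ContourIntegral.
Variable R : realType.
Local Notation mu := (@lebesgue_measure R).
Local Notation I := (`[0, 2 * pi]%classic : set R).
Implicit Types (f F : R -> R) (c : R[i]) (r : R) (h g : R[i] -> R[i]).

Lemma two_pi_gt0 : 0 < 2 * pi :> R.
Proof. by rewrite mulr_gt0 ?pi_gt0. Qed.

Lemma measurable_period : measurable I.
Proof. exact: measurable_itv. Qed.

Lemma fine_lebesgue_period : fine (mu I) = 2 * pi.
Proof. by rewrite lebesgue_measure_itv /= ifT ?lte_fin ?two_pi_gt0 //= oppr0 addr0. Qed.

Lemma continuous_integrable_period f : continuous f -> mu.-integrable I (EFin \o f).
Proof.
move=> cf; apply: continuous_compact_integrable; first exact: segment_compact.
exact: continuous_subspaceT.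
Qed.

Lemma norm_Rintegral_period_le f K : continuous f -> (forall t, `|f t| <= K) ->
  `|\int[mu]_(t in I) f t| <= K * (2 * pi).
Proof.
move=> cf f_le.
have cnf : continuous (fun t => `|f t|).
  by move=> t; apply: continuous_comp; [exact: cf | exact: norm_continuous].
apply: le_trans (@le_normr_Rintegral _ _ _ mu I f measurable_period
  (continuous_integrable_period cf)) _.
have cK : continuous (fun _ : R => K) by move=> t; apply: cst_continuous.
apply: le_trans (@le_Rintegral _ _ _ mu I _ (fun=> K) measurable_period
  (continuous_integrable_period cnf)
  (continuous_integrable_period cK) (fun t _ => f_le t)) _.
by rewrite Rintegral_cst ?fine_lebesgue_period //; exact: measurable_period.
Qed.

Lemma Rintegral_period_derive f F : (forall t : R, is_derive t 1 F (f t)) ->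
  continuous f -> F (2 * pi) = F 0 -> \int[mu]_(t in I) f t = 0.
Proof.
move=> dF cf F_periodic.
have cF : continuous F.
  by move=> t; apply/differentiable_continuous/derivable1_diffP; case: (dF t).
have F_LR : derivable_oo_LRcontinuous F 0 (2 * pi).
  split; first by move=> t _; case: (dF t).
    exact/cvg_at_right_filter/cF.
  exact/cvg_at_left_filter/cF.
have F'E : {in `]0, 2 * pi[, F^`()%classic =1 f}.
  by move=> t _; rewrite derive1E derive_val.
rewrite /Rintegral (continuous_FTC2 two_pi_gt0 (continuous_subspaceT cf) F_LR F'E).
by rewrite F_periodic /= subrr.
Qed.

Definition cint_integrand c r h t := h (circ c r t) * dcirc r t.

Lemma cintD c r h g :
  ccontinuous (cint_integrand c r h) -> ccontinuous (cint_integrand c r g) ->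
  cint c r (fun z => h z + g z) = cint c r h + cint c r g.
Proof.
move=> [hRe hIm] [gRe gIm]; rewrite /cint -mulrDr; congr (_ * _).
rewrite (@eq_Rintegral _ _ _ mu _ (fun t => Re (cint_integrand c r h t) +
                                           Re (cint_integrand c r g t))); last first.
  by move=> t _; rewrite /cint_integrand mulrDl; case: (h _ * _); case: (g _ * _).
rewrite [X in _ +i* X](@eq_Rintegral _ _ _ mu _ (fun t => Im (cint_integrand c r h t) +
                                           Im (cint_integrand c r g t))); last first.
  by move=> t _; rewrite /cint_integrand mulrDl; case: (h _ * _); case: (g _ * _).
by rewrite !RintegralD ?measurable_period ?continuous_integrable_period.
Qed.

Lemma cint0 c r : cint c r (fun=> 0) = 0.
Proof.
have int0 (g : R -> R) : (forall t, g t = 0) -> \int[mu]_(t in I) g t = 0.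
  move=> g0; rewrite (@eq_Rintegral _ _ _ mu _ (fun=> 0)); last by move=> t _.
  by rewrite Rintegral_cst ?mul0r //; exact: measurable_period.
by rewrite /cint !int0 ?mulr0 // => t; rewrite mul0r.
Qed.

Lemma normc_cint_le c r h K : 0 <= r -> ccontinuous (cint_integrand c r h) ->
  (forall t, normc (h (circ c r t)) <= K) -> normc (cint c r h) <= 2 * (r * K).
Proof.
move=> r_ge0 [hRe hIm] h_le.
have integrand_le t : normc (cint_integrand c r h t) <= K * r.
  by rewrite /cint_integrand normcM normc_dcirc // ler_wpM2r.
have ReI := norm_Rintegral_period_le hRe (fun t => le_trans (normc_Re _) (integrand_le t)).
have ImI := norm_Rintegral_period_le hIm (fun t => le_trans (normc_Im _) (integrand_le t)).
rewrite /cint_integrand in ReI ImI.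
rewrite /cint normcM normcV.
have -> : normc ((0 : R) +i* (2 * pi)) = 2 * pi.
  by rewrite normcE /= expr0n add0r sqrtr_sqr ger0_norm // ltW // two_pi_gt0.
rewrite ler_pdivrMl ?two_pi_gt0 //.
apply: le_trans (normc_le_ReIm _) _ => /=.
lra.
Qed.

End ContourIntegral.

Section CintInvOutside.
Variables (R : realType) (a b r : R).
Hypotheses (r_gt0 : 0 < r) (r_lt : r < normc (a +i* b)).

Let u (t : R) := a + r * cos t.
Let w (t : R) := b + r * sin t.
Let sq t := u t ^+ 2 + w t ^+ 2.
(* [X t +i* Y t] is [conj c * z t] for [z := circ c r] and [c := a +i* b]; as
   [X > 0] on the circle, [atan (Y / X)] is a continuous branch of
   [arg z - arg c], an antiderivative of [Im (z' / z)], while [ln |z|] is one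
   of [Re (z' / z)]. *)
Let X t := a * u t + b * w t.
Let Y t := a * w t - b * u t.

Let circE t : circ (a +i* b) r t = u t +i* w t.
Proof. by []. Qed.

Let X_gt0 t : 0 < X t.
Proof.
have sE : normc (a +i* b) ^+ 2 = a ^+ 2 + b ^+ 2.
  by rewrite /= sqr_sqrtr // addr_ge0 ?sqr_ge0.
have CS : (a * cos t + b * sin t) ^+ 2 <= normc (a +i* b) ^+ 2.
  rewrite sE -subr_ge0 -[a ^+ 2 + b ^+ 2]mulr1 -(cos2Dsin2 t).
  by rewrite (_ : _ - _ = (a * sin t - b * cos t) ^+ 2) ?sqr_ge0 //; ring.
have -> : X t = normc (a +i* b) ^+ 2 + r * (a * cos t + b * sin t).
  by rewrite /X /u /w sE; ring.
move: (normc_ge0 (a +i* b)) CS r_lt r_gt0.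
move: (normc _) (a * cos t + b * sin t) => s x s_ge0 x_le r_lt_s.
have : - s <= x by nra.
nra.
Qed.

Let XY_sq t : X t ^+ 2 + Y t ^+ 2 = (a ^+ 2 + b ^+ 2) * sq t.
Proof. by rewrite /X /Y /sq; ring. Qed.

Let sq_gt0 t : 0 < sq t.
Proof.
have := X_gt0 t; have := XY_sq t; have := sqr_ge0 (Y t).
have : 0 <= a ^+ 2 + b ^+ 2 by rewrite addr_ge0 ?sqr_ge0.
nra.
Qed.

Let du (t : R) : is_derive t 1 u (- (r * sin t)).
Proof. by apply: is_derive_eq; rewrite /GRing.scale /=; ring. Qed.

Let dw (t : R) : is_derive t 1 w (r * cos t).
Proof. by apply: is_derive_eq; rewrite /GRing.scale /=; ring. Qed.

Let integrandE t : (circ (a +i* b) r t)^-1 * dcirc r t =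
  ((u t * - (r * sin t) + w t * (r * cos t)) / sq t) +i*
  ((u t * (r * cos t) - w t * - (r * sin t)) / sq t).
Proof.
have sq_neq0 : u t ^+ 2 + w t ^+ 2 != 0 by rewrite gt_eqF ?sq_gt0.
by rewrite circE /=; congr (_ +i* _); rewrite /sq; field.
Qed.

Let dRe (t : R) : is_derive t 1 (fun t => 2^-1 * ln (sq t))
  (Re ((circ (a +i* b) r t)^-1 * dcirc r t)).
Proof.
have dsq := is_deriveD (is_deriveX 2 (du t)) (is_deriveX 2 (dw t)).
have dlnsq := is_derive1_comp (is_derive1_ln (sq_gt0 t)) dsq.
rewrite integrandE /=; apply: is_derive_eq (is_deriveZ (2^-1) dlnsq) _.
have sq_neq0 := lt0r_neq0 (sq_gt0 t).
by rewrite /GRing.scale /=; field.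
Qed.

Let dIm (t : R) : is_derive t 1 (atan \o (Y * (fun t => (X t)^-1)))
  (Im ((circ (a +i* b) r t)^-1 * dcirc r t)).
Proof.
have dX : is_derive t 1 X (a * - (r * sin t) + b * (r * cos t)).
  by apply: is_derive_eq; rewrite /GRing.scale /=; ring.
have dY : is_derive t 1 Y (a * (r * cos t) - b * - (r * sin t)).
  by apply: is_derive_eq; rewrite /GRing.scale /=; ring.
have X_neq0 := lt0r_neq0 (X_gt0 t).
have dYX := is_deriveM dY (is_deriveV X_neq0 dX).
rewrite integrandE /=; apply: is_derive_eq (is_derive1_comp (is_derive1_atan _) dYX) _.
have sq_neq0 := lt0r_neq0 (sq_gt0 t).
have s_neq0 : a ^+ 2 + b ^+ 2 != 0.
  by rewrite lt0r_neq0 // -sqrtr_gt0 (lt_trans r_gt0 r_lt).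
have -> : 1 + (Y * (fun t => (X t)^-1)) t ^+ 2 = (a ^+ 2 + b ^+ 2) * sq t / X t ^+ 2.
  by rewrite -XY_sq !fctE; field.
rewrite /GRing.scale /=.
move: X_neq0 sq_neq0; rewrite /X /Y /sq => X_neq0 sq_neq0.
by field; rewrite X_neq0 sq_neq0 s_neq0.
Qed.

Let circ_neq0 t : circ (a +i* b) r t != 0.
Proof.
apply: contra (lt0r_neq0 (sq_gt0 t)); rewrite circE => /eqP [u0 w0].
by rewrite /sq u0 w0 expr0n addr0.
Qed.

Lemma cint_inv_outside : cint (a +i* b) r (fun z => z^-1) = 0.
Proof.
have [cRe cIm] := ccontinuousM (ccontinuousV circ_neq0 (ccontinuous_circ (a +i* b) r))
  (ccontinuous_dcirc r).
rewrite /cint (Rintegral_period_derive dRe cRe) ?(Rintegral_period_derive dIm cIm) ?mulr0 //.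
  by rewrite /= !fctE /X /Y /u /w mulr_natl cos2pi sin2pi cos0 sin0.
by rewrite /sq /u /w mulr_natl cos2pi sin2pi cos0 sin0.
Qed.

End CintInvOutside.

Lemma cint_inv_eq0 (R : realType) (c : R[i]) (r : R) :
  0 < r -> r < normc c -> cint c r (fun z => z^-1) = 0.
Proof. by case: c => a b; apply: cint_inv_outside. Qed.

Section Resolvent.
Variables (F : fieldType) (n : nat).
Implicit Types (A D E M : 'M[F]_n) (z : F).

Lemma unitmx_scalar_sub M z : ~~ eigenvalue M z -> z%:M - M \in unitmx.
Proof.
move=> z_not_eig; have : M - z%:M \in unitmx.
  by rewrite -row_free_unit -kermx_eq0; move: z_not_eig; rewrite /eigenvalue negbK.
have -> : z%:M - M = (-1) *: (M - z%:M) by rewrite scaleN1r opprB.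
by rewrite unitmxZ // unitrN1.
Qed.

Lemma invmx_perturb A D E :
  A \in unitmx -> D *m (A + E) = 1%:M -> invmx A = D + D *m E *m invmx A.
Proof.
move=> A_unit DAE.
by rewrite -[LHS]mul1mx -DAE -!mulmxA mulmxDl mulmxV // mulmxDr mulmx1.
Qed.

Definition diag_resolvent (d : 'I_n -> F) z := diag_mx (\row_j (z - d j)^-1).

Lemma diag_resolventK (d : 'I_n -> F) z : (forall j, z != d j) ->
  diag_resolvent d z *m (z%:M - diag_mx (\row_j d j)) = 1%:M.
Proof.
move=> z_neq; apply/matrixP => i j; rewrite mul_diag_mx !mxE.
have [->|_] := eqVneq i j; last by rewrite !mulr0n subrr mulr0.
by rewrite !mulr1n mulVf // subr_eq0.
Qed.

End Resolvent.

Section EntrywiseBounds.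
Variable R : realType.

Definition entrywise_le m p (X : 'M[R[i]]_(m, p)) (K : R) :=
  forall i j, normc (X i j) <= K.

Lemma ler_double_sum m p (F : 'I_m -> 'I_p -> R) i j :
  (forall i j, 0 <= F i j) -> F i j <= \sum_i \sum_j F i j.
Proof.
move=> F_ge0; rewrite (bigD1 i) //= (bigD1 j) //= -addrA lerDl.
by rewrite addr_ge0 ?sumr_ge0 // => k _; rewrite sumr_ge0.
Qed.

Lemma normc_mulmx_le m p q (X : 'M[R[i]]_(m, p)) (Y : 'M[R[i]]_(p, q)) i k K :
  (forall j, normc (X i j) * normc (Y j k) <= K) -> normc ((X *m Y) i k) <= p%:R * K.
Proof.
move=> XY_le; rewrite mxE; apply: le_trans (normc_sum _ _ _) _.
have -> : p%:R * K = \sum_(j < p) K by rewrite sumr_const card_ord mulr_natl.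
by apply: ler_sum => j _; rewrite normcM.
Qed.

Lemma entrywise_le_mulmx m p q (X : 'M[R[i]]_(m, p)) (Y : 'M[R[i]]_(p, q)) a b :
  0 <= b -> entrywise_le X a -> entrywise_le Y b -> entrywise_le (X *m Y) (p%:R * (a * b)).
Proof.
by move=> b_ge0 X_le Y_le i k; apply: normc_mulmx_le => j; rewrite ler_pM ?normc_ge0.
Qed.

Lemma entrywise_le_mnorm m p (X : 'M[R[i]]_(m, p)) : entrywise_le X (mnorm X).
Proof.
move=> i j; rewrite normcE ler_sqrt; last first.
  by rewrite !sumr_ge0 // => ? _; rewrite !sumr_ge0 // => ? _; rewrite addr_ge0 ?sqr_ge0.
by apply: ler_double_sum => *; rewrite addr_ge0 ?sqr_ge0.
Qed.

Lemma mnorm_le_entrywise m p (X : 'M[R[i]]_(m, p)) K :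
  0 <= K -> entrywise_le X K -> mnorm X <= Num.sqrt (m * p)%:R * K.
Proof.
move=> K_ge0 X_le; rewrite /mnorm -[K in _ * K]ger0_norm // -sqrtr_sqr -sqrtrM ?ler0n //.
rewrite ler_sqrt ?mulr_ge0 ?ler0n ?sqr_ge0 //.
have -> : (m * p)%:R * K ^+ 2 = \sum_(i < m) \sum_(j < p) K ^+ 2.
  by rewrite !sumr_const !card_ord -mulrnA mulnC mulr_natl.
apply: ler_sum => i _; apply: ler_sum => j _.
have ReIm_ge0 : 0 <= Re (X i j) ^+ 2 + Im (X i j) ^+ 2 by rewrite addr_ge0 ?sqr_ge0.
rewrite -[leLHS]sqr_sqrtr // -normcE.
by rewrite lerXn2r ?nnegrE ?normc_ge0.
Qed.

(* The sum [S] of the moduli of all entries of [X] satisfies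
   [S <= n^2 a + n^4 a b S <= n^2 a + S / 2]. *)
Lemma entrywise_le_fixpoint n (D E X : 'M[R[i]]_n) a b :
  0 <= a -> 0 <= b -> entrywise_le D a -> entrywise_le E b ->
  n%:R ^+ 4 * (a * b) <= 1 / 2 -> X = D + D *m E *m X ->
  entrywise_le X (2 * (n%:R ^+ 2 * a)).
Proof.
move=> a_ge0 b_ge0 D_le E_le small XE.
pose S := \sum_i \sum_j normc (X i j).
have X_le_S : entrywise_le X S by move=> i j; apply: ler_double_sum => *; exact: normc_ge0.
have S_ge0 : 0 <= S by rewrite !sumr_ge0 // => i _; rewrite sumr_ge0 // => j _; exact: normc_ge0.
have DEX_le := entrywise_le_mulmx S_ge0 (entrywise_le_mulmx b_ge0 D_le E_le) X_le_S.
have X_le i j : normc (X i j) <= a + n%:R * (n%:R * (a * b) * S).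
  by rewrite XE mxE; apply: le_trans (le_normcD _ _) (lerD (D_le i j) (DEX_le i j)).
have S_le : S <= n%:R * (n%:R * (a + n%:R * (n%:R * (a * b) * S))).
  apply: le_trans (ler_sum _ (fun i _ => ler_sum _ (fun j _ => X_le i j))) _.
  by rewrite !sumr_const !card_ord !mulr_natl.
have half_S := ler_wpM2r S_ge0 small.
have S_bound : n%:R * (n%:R * (a + n%:R * (n%:R * (a * b) * S))) =
               n%:R ^+ 2 * a + n%:R ^+ 4 * (a * b) * S :> R by ring.
move=> i j; apply: le_trans (X_le_S i j) _; lra.
Qed.

End EntrywiseBounds.

Section RieszBounds.
Variables (R : realType) (n : nat) (v : 'I_n -> R) (E : 'M[R[i]]_n).
Variables (c : R[i]) (r d b : R).
Hypotheses (r_gt0 : 0 < r) (d_gt0 : 0 < d) (b_ge0 : 0 <= b) (E_le : mnorm E <= b).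
Hypothesis small : n%:R ^+ 4 * (d^-1 * b) <= 1 / 2.
Hypothesis circ_sep : forall t j, d <= normc (circ c r t - (v j)%:C).
Hypothesis circ_noeig : forall t, ~~ eigenvalue (Lambda v + E) (circ c r t).

Local Notation N := (n%:R : R).
Local Notation M := (Lambda v + E).
Let res t := invmx ((circ c r t)%:M - M).
Let dres t := diag_resolvent (fun j => (v j)%:C) (circ c r t).

Let E_entry_le : entrywise_le E b.
Proof. by move=> i j; apply: le_trans (entrywise_le_mnorm E i j) E_le. Qed.

Let circ_neq t j : circ c r t != (v j)%:C.
Proof.
by apply: contraTneq (circ_sep t j) => ->; rewrite subrr normc0 -ltNge.
Qed.

Let resE t : res t = dres t + dres t *m E *m res t.
Proof.
apply: invmx_perturb; first exact: unitmx_scalar_sub.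
by rewrite opprD addrA subrK; exact: diag_resolventK.
Qed.

Let dres_le t : entrywise_le (dres t) d^-1.
Proof.
move=> i j; rewrite /dres /diag_resolvent !mxE; have [->|_] := eqVneq i j; last first.
  by rewrite mulr0n normc0 invr_ge0 ltW.
by rewrite mulr1n normcV lef_pV2 ?posrE ?(lt_le_trans d_gt0 (circ_sep t j)).
Qed.

Let res_le t : entrywise_le (res t) (2 * (N ^+ 2 * d^-1)).
Proof.
apply: entrywise_le_fixpoint (dres_le t) E_entry_le small (resE t) => //.
by rewrite invr_ge0 ltW.
Qed.

Let res_continuous i j : ccontinuous (fun t => res t i j).
Proof.
apply: (ccontinuous_invmx (A := fun t => (circ c r t)%:M - M)) => [t|i' j'].
  exact: unitmx_scalar_sub.
under eq_fun do rewrite !mxE.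
apply: ccontinuousB; last exact: ccontinuous_cst.
case: (i' == j'); under eq_fun do rewrite ?mulr1n ?mulr0n.
  exact: ccontinuous_circ.
exact: ccontinuous_cst.
Qed.

Let integrand_continuous i j :
  ccontinuous (cint_integrand c r (fun z => invmx (z%:M - M) i j)).
Proof. exact: ccontinuousM (res_continuous i j) (ccontinuous_dcirc r). Qed.

Lemma entrywise_le_riesz : entrywise_le (riesz c r M) (2 * (r * (2 * (N ^+ 2 * d^-1)))).
Proof.
move=> i j; rewrite mxE; apply: normc_cint_le => // [|t]; first exact: ltW.
exact: res_le.
Qed.

(* On such an entry the unperturbed resolvent is [(i == j) / z], whose integral
   vanishes because the circle does not enclose 0; what remains is an entry of
   [D E (z - M)^-1], of order [b]. *)
Lemma riesz_ker_le i j : r < normc c -> v i = 0 \/ v j = 0 ->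
  normc (riesz c r M i j) <= 2 * (r * (N * (N * (d^-1 * b) * (2 * (N ^+ 2 * d^-1))))).
Proof.
move=> r_lt vij0.
pose h := if i == j then (fun z : R[i] => z^-1) else (fun=> 0).
have dres_ij t : dres t i j = h (circ c r t).
  move: vij0; rewrite /dres /diag_resolvent !mxE /h.
  have [<-|_] := eqVneq i j; last by rewrite mulr0n.
  by rewrite mulr1n => -[] ->; rewrite subr0.
have circ_neq0 t : circ c r t != 0.
  by case: vij0 => v0; [have := circ_neq t i | have := circ_neq t j]; rewrite v0.
have ch : ccontinuous (cint_integrand c r h).
  apply: ccontinuousM (ccontinuous_dcirc r); rewrite /h; case: eqP => _.
    exact: ccontinuousV circ_neq0 (ccontinuous_circ c r).
  exact: ccontinuous_cst.
have cint_h : cint c r h = 0.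
  by rewrite /h; case: eqP => _; [exact: cint_inv_eq0 | exact: cint0].
have crem : ccontinuous (cint_integrand c r (fun z => invmx (z%:M - M) i j - h z)).
  rewrite /cint_integrand; under eq_fun do rewrite mulrBl.
  exact: ccontinuousB (integrand_continuous i j) ch.
have -> : riesz c r M i j = cint c r (fun z => h z + (invmx (z%:M - M) i j - h z)).
  by rewrite mxE; congr cint; apply: funext => z; rewrite [RHS]addrC subrK.
rewrite cintD // cint_h add0r; apply: normc_cint_le => // [|t]; first exact: ltW.
rewrite -/(res t) -dres_ij {1}resE mxE addrAC subrr add0r.
have KR_ge0 : 0 <= 2 * (N ^+ 2 * d^-1) by rewrite !mulr_ge0 ?ler0n ?invr_ge0 ?ltW.
exact: entrywise_le_mulmx KR_ge0 (entrywise_le_mulmx b_ge0 (dres_le t) E_entry_le)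
  (res_le t) i j.
Qed.

End RieszBounds.

Section KernelSandwich.
Variables (R : realType) (n : nat).
Local Notation N := (n%:R : R).

Lemma hermitian_Lambda_ker (w : 'I_n -> R) (Z : 'M[R[i]]_n) : is_hermitian Z ->
  (forall x : 'cV[R[i]]_n, Lambda w *m (Z *m x) = 0) ->
  forall i j, w i != 0 \/ w j != 0 -> Z i j = 0.
Proof.
move=> Z_herm Z_ker.
have Z_row i j : w i != 0 -> Z i j = 0.
  move=> wi_neq0; have := congr1 (fun A : 'cV[R[i]]_n => A i ord0) (Z_ker (delta_mx j ord0)).
  rewrite -colE mul_diag_mx !mxE => /eqP; rewrite mulf_eq0 => /orP [/eqP wi0|/eqP //].
  by have /= wi0' := congr1 (@complex.Re R) wi0; rewrite wi0' eqxx in wi_neq0.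
move=> i j [/Z_row -> // | wj_neq0].
by rewrite -Z_herm mxE Z_row // conjc0.
Qed.

Lemma entrywise_le_ker_sandwich (v : 'I_n -> R) (P Z Q : 'M[R[i]]_n) p z q :
  0 <= p -> 0 <= z -> 0 <= q ->
  (forall i j, v j = 0 -> normc (P i j) <= p) ->
  (forall i j, v i = 0 -> normc (Q i j) <= q) ->
  (forall i j, v i != 0 \/ v j != 0 -> Z i j = 0) -> entrywise_le Z z ->
  entrywise_le (P *m Z *m Q) (N * (N * (p * z) * q)).
Proof.
move=> p_ge0 z_ge0 q_ge0 P_le Q_le Z_supp Z_le.
have PZ_le i k : normc ((P *m Z) i k) <= N * (p * z).
  apply: normc_mulmx_le => j; have [vj0|vj_neq0] := eqVneq (v j) 0.
    by rewrite ler_pM ?normc_ge0 ?P_le.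
  by rewrite Z_supp ?normc0 ?mulr0 ?mulr_ge0 //; left.
have PZ_supp i k : v k != 0 -> (P *m Z) i k = 0.
  by move=> vk_neq0; rewrite mxE big1 // => j _; rewrite Z_supp ?mulr0 //; right.
move=> i l; apply: normc_mulmx_le => k; have [vk0|vk_neq0] := eqVneq (v k) 0.
  by rewrite ler_pM ?normc_ge0 ?Q_le.
by rewrite PZ_supp ?normc0 ?mul0r // !mulr_ge0 ?ler0n.
Qed.

End KernelSandwich.

Section Separation.
Variable R : realType.

Lemma exists_lower_bound (I : finType) (f : I -> R) :
  (forall i, 0 < f i) -> exists2 e, 0 < e & forall i, e <= f i.
Proof.
move=> f_gt0; have S_ge0 : 0 <= \sum_i (f i)^-1.
  by rewrite sumr_ge0 // => i _; rewrite invr_ge0 ltW.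
exists (1 + \sum_i (f i)^-1)^-1; first by rewrite invr_gt0 ltr_wpDr.
move=> i; rewrite -[f i]invrK lef_pV2 ?posrE ?invr_gt0 ?ltr_wpDr //.
rewrite (bigD1 i) //= addrCA lerDl addr_ge0 // sumr_ge0 // => k _.
by rewrite invr_ge0 ltW.
Qed.

Lemma padz_circ_separation (l m : nat) (ap : 'I_l -> R) (c : R[i]) (r : R) :
  0 <= r -> normc c != r -> (forall k, normc ((ap k)%:C - c) != r) ->
  exists2 e, 0 < e & forall bp : 'I_l -> R, (forall k, `|bp k - ap k| < e) ->
    forall t j, e <= normc (circ c r t - (padz m bp j)%:C).
Proof.
move=> r_ge0 c_off ap_off.
pose x o : R := if o is Some k then ap k else 0.
have x_off o : 0 < `|normc ((x o)%:C - c) - r|.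
  by case: o => [k|] /=; rewrite normr_gt0 subr_eq0 ?ap_off // sub0r normcN.
have [e e_gt0 e_le] := exists_lower_bound x_off.
exists (e / 2) => [|bp near t j]; first by rewrite divr_gt0.
rewrite /padz; case: fintype.split => [k|_].
  have := circ_dist_ge c t (ap k)%:C (bp k)%:C r_ge0.
  rewrite -raddfB normc_real; have := e_le (Some k); have := near k; lra.
have := circ_dist_ge c t 0%:C 0%:C r_ge0; have := e_le None.
rewrite /x subrr normc0; lra.
Qed.

End Separation.

Lemma riesz_sandwich_bounds (R : realType) (n : nat) (c1 c0 : R[i]) (r1 r0 d : R) :
  0 < r1 -> 0 < r0 -> r1 < normc c1 -> 0 < d ->
  exists C delta, 0 < delta /\
  forall (v : 'I_n -> R) (E Z : 'M[R[i]]_n) (b : R),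
    (forall t j, d <= normc (circ c1 r1 t - (v j)%:C)) ->
    (forall t j, d <= normc (circ c0 r0 t - (v j)%:C)) ->
    (forall t, ~~ eigenvalue (Lambda v + E) (circ c1 r1 t)) ->
    (forall t, ~~ eigenvalue (Lambda v + E) (circ c0 r0 t)) ->
    (forall i j, v i != 0 \/ v j != 0 -> Z i j = 0) ->
    0 <= b -> b <= delta -> mnorm E <= b -> mnorm Z <= b ->
    let P1 := riesz c1 r1 (Lambda v + E) in
    let P0 := riesz c0 r0 (Lambda v + E) in
    mnorm (P1 *m Z *m P0) <= C * b ^+ 2 /\ mnorm (P1 *m Z *m P1) <= C * b ^+ 3.
Proof.
move=> r1_gt0 r0_gt0 r1_lt d_gt0.
pose N : R := n%:R; pose KR := 2 * (N ^+ 2 * d^-1).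
pose K0 := 2 * (r0 * KR); pose K1 := 2 * (r1 * (N * (N * d^-1 * KR))).
have [N_ge0 dV_ge0] : 0 <= N /\ 0 <= d^-1 by rewrite ler0n invr_ge0 ltW.
have KR_ge0 : 0 <= KR by rewrite mulr_ge0 // mulr_ge0 // exprn_ge0.
have K0_ge0 : 0 <= K0 by rewrite mulr_ge0 // mulr_ge0 // ltW.
have K1_ge0 : 0 <= K1 by rewrite mulr_ge0 // mulr_ge0 ?(ltW r1_gt0) // !mulr_ge0.
exists (N ^+ 3 * K1 * (K0 + K1)), (d / (2 * (N ^+ 4 + 1))).
split=> [|v E Z b sep1 sep0 noeig1 noeig0 Z_supp b_ge0 b_le E_le Z_le P1 P0].
  by rewrite divr_gt0 // mulr_gt0 // ltr_wpDl ?exprn_ge0.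
have small : N ^+ 4 * (d^-1 * b) <= 1 / 2.
  have N4_ge0 : 0 <= N ^+ 4 := exprn_ge0 4 N_ge0.
  have D_gt0 : 0 < 2 * (N ^+ 4 + 1) by rewrite mulr_gt0 // ltr_wpDl.
  have := ler_wpM2l N4_ge0 (ler_wpM2l dV_ge0 b_le).
  rewrite mulKf ?lt0r_neq0 //.
  have := mulVf (lt0r_neq0 D_gt0); have : 0 <= (2 * (N ^+ 4 + 1))^-1 by rewrite invr_ge0 ltW.
  move: (_^-1) => y; lra.
have P0_le := entrywise_le_riesz r0_gt0 d_gt0 b_ge0 E_le small sep0 noeig0.
have P1_le i j : v i = 0 \/ v j = 0 -> normc (P1 i j) <= K1 * b.
  move=> vij0; apply: le_trans (riesz_ker_le r1_gt0 d_gt0 b_ge0 E_le small sep1 noeig1 r1_lt vij0) _.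
  by rewrite /K1 /KR le_eqVlt; apply/orP; left; apply/eqP; ring.
have Z_entry_le : entrywise_le Z b.
  by move=> i j; apply: le_trans (entrywise_le_mnorm Z i j) Z_le.
have sqrt_NN : Num.sqrt (n * n)%:R = N by rewrite natrM -expr2 sqrtr_sqr ger0_norm ?ler0n.
have K1b_ge0 := mulr_ge0 K1_ge0 b_ge0.
have P1Z_le i j : v j = 0 -> normc (P1 i j) <= K1 * b by move=> vj0; apply: P1_le; right.
have sandwich_le (Q : 'M[R[i]]_n) q K :
  0 <= q -> (forall i j, v i = 0 -> normc (Q i j) <= q) ->
  N * (N * (N * (K1 * b * b) * q)) <= K -> mnorm (P1 *m Z *m Q) <= K.
  move=> q_ge0 Q_le K_ge.
  have PZQ_le := entrywise_le_ker_sandwich K1b_ge0 b_ge0 q_ge0 P1Z_le Q_le Z_supp Z_entry_le.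
  apply: le_trans (mnorm_le_entrywise _ PZQ_le) _; last by rewrite sqrt_NN.
  exact: mulr_ge0 N_ge0 (mulr_ge0 (mulr_ge0 N_ge0 (mulr_ge0 K1b_ge0 b_ge0)) q_ge0).
split.
  apply: sandwich_le K0_ge0 (fun i j _ => P0_le i j) _.
  rewrite -subr_ge0 (_ : _ - _ = N ^+ 3 * K1 * K1 * b ^+ 2); last by rewrite /N; ring.
  exact: mulr_ge0 (mulr_ge0 (mulr_ge0 (exprn_ge0 3 N_ge0) K1_ge0) K1_ge0) (exprn_ge0 2 b_ge0).
apply: sandwich_le K1b_ge0 (fun i j vi0 => P1_le i j (or_introl vi0)) _.
rewrite -subr_ge0 (_ : _ - _ = N ^+ 3 * K1 * K0 * b ^+ 3); last by rewrite /N; ring.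
exact: mulr_ge0 (mulr_ge0 (mulr_ge0 (exprn_ge0 3 N_ge0) K1_ge0) K0_ge0) (exprn_ge0 3 b_ge0).
Qed.

Theorem lemma3p4 (R : realType) (l m : nat) (ap : 'I_l -> R)
  (c1 c0 : R[i]) (r1 r0 : R) :
  (forall k, 0 < ap k) ->
  0 < r1 -> 0 < r0 ->
  (forall k, encloses c1 r1 (ap k)%:C) -> excludes c1 r1 0 ->
  encloses c0 r0 0 -> (forall k, excludes c0 r0 (ap k)%:C) ->
  exists eps : R, exists C : R, exists delta : R,
    0 < eps /\ 0 < delta /\
    forall (bp : 'I_l -> R), (forall k, `|bp k - ap k| < eps) ->
    forall (E Z : 'M[R[i]]_(l + m)) (b : R),
      is_hermitian E -> hpsd Z ->
      (forall v : 'cV[R[i]]_(l + m), Lambda (padz m bp) *m (Z *m v) = 0) ->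
      0 < b -> b <= delta -> mnorm E <= b -> mnorm Z <= b ->
      (forall z : R[i], `|z - c1| = r1%:C \/ `|z - c0| = r0%:C ->
         ~~ eigenvalue (Lambda (padz m bp) + E) z) ->
      let P1 := riesz c1 r1 (Lambda (padz m bp) + E) in
      let P0 := riesz c0 r0 (Lambda (padz m bp) + E) in
      mnorm (P1 *m Z *m P0) <= C * b ^+ 2 /\
      mnorm (P1 *m Z *m P1) <= C * b ^+ 3.
Proof.
move=> _ r1_gt0 r0_gt0 enc1 exc1 enc0 exc0.
have r1_lt : r1 < normc c1 by move: exc1; rewrite /excludes normC_normc ltcR sub0r normcN.
have c0_lt : normc c0 < r0 by move: enc0; rewrite /encloses normC_normc ltcR sub0r normcN.
have ap_off1 k : normc ((ap k)%:C - c1) != r1.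
  by move: (enc1 k); rewrite /encloses normC_normc ltcR => /lt_eqF ->.
have ap_off0 k : normc ((ap k)%:C - c0) != r0.
  by move: (exc0 k); rewrite /excludes normC_normc ltcR => /gt_eqF ->.
have [d1 d1_gt0 sep1] := padz_circ_separation m (ltW r1_gt0) (negbT (gt_eqF r1_lt)) ap_off1.
have [d0 d0_gt0 sep0] := padz_circ_separation m (ltW r0_gt0) (negbT (lt_eqF c0_lt)) ap_off0.
pose d := Num.min d1 d0; have d_gt0 : 0 < d by rewrite lt_min d1_gt0.
have [C [delta [delta_gt0 bounds]]] :=
  @riesz_sandwich_bounds R (l + m) c1 c0 r1 r0 d r1_gt0 r0_gt0 r1_lt d_gt0.
exists d, C, delta; split=> //; split=> // bp near E Z b _ [Z_herm _] Z_ker b_gt0 b_le E_le Z_le.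
move=> noeig; apply: bounds => //; last exact: ltW.
- move=> t j; apply: le_trans (sep1 bp _ t j); first by rewrite ge_min lexx.
  by move=> k; apply: lt_le_trans (near k) _; rewrite ge_min lexx.
- move=> t j; apply: le_trans (sep0 bp _ t j); first by rewrite ge_min lexx orbT.
  by move=> k; apply: lt_le_trans (near k) _; rewrite ge_min lexx orbT.
- by move=> t; apply: noeig; left; rewrite normC_normc normc_circ_sub ?ltW.
- by move=> t; apply: noeig; right; rewrite normC_normc normc_circ_sub ?ltW.
- exact: hermitian_Lambda_ker Z_herm Z_ker.
Qed.
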